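(* Let $\alpha \in \mathbb{R}_{>0}$ and $M_\alpha = \{f(\alpha) \mid f(x) \in \mathbb{N}_0[x,x^{-1}]\}$ as an additive monoid. Then $M_\alpha$ is an LFM if and only if it is a UFM.
   Context: $\mathbb{N}_0[x,x^{-1}]$ denotes the semiring of Laurent polynomials with coefficients in $\mathbb{N}_0$. For an atomic reduced additive monoid $M$ and nonzero $a \in M$, $\mathsf{Z}(a)$ is the set of factorizations of $a$ (formal sums of atoms, up to order, adding to $a$), and $|z|$ is the length of $z$ (number of atoms with repetition). $M$ is an LFM (length-factorial monoid) if it is atomic and for all $a \in M$ and $z,z' \in \mathsf{Z}(a)$, $|z| = |z'|$ implies $z = z'$; it is a UFM if it is atomic and $|\mathsf{Z}(a)| = 1$ for all nonzero $a$. *)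

From Stdlib Require Import Reals ZArith List Permutation.
Open Scope R_scope.

Definition sumR (l : list R) : R := fold_right Rplus 0 l.

(* Evaluation at [a] of the Laurent polynomial in N_0[x,x^{-1}] represented
   as the multiset (list) [l] of its monomial exponents, each monomial
   x^k occurring with multiplicity equal to its coefficient. *)
Definition laurent_eval (a : R) (l : list Z) : R :=
  sumR (map (fun k => powerRZ a k) l).

Definition M_alpha (a : R) (x : R) : Prop :=
  exists l : list Z, x = laurent_eval a l.

(* Generic notions for a (reduced) additive submonoid S of R, given by its
   carrier predicate.  The only unit of such a reduced monoid is 0. *)
Definition is_atom (S : R -> Prop) (u : R) : Prop :=
  S u /\ u <> 0 /\
  forall v w, S v -> S w -> u = v + w -> v = 0 \/ w = 0.

(* A factorization of a: a formal sum of atoms (a list of atoms, considered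
   up to order, i.e. up to Permutation) adding up to a.  Its length is the
   length of the list. *)
Definition is_factorization (S : R -> Prop) (a : R) (z : list R) : Prop :=
  Forall (is_atom S) z /\ sumR z = a.

Definition atomic (S : R -> Prop) : Prop :=
  forall a, S a -> a <> 0 -> exists z, is_factorization S a z.

Definition LFM (S : R -> Prop) : Prop :=
  atomic S /\
  forall a z z', S a -> is_factorization S a z -> is_factorization S a z' ->
    length z = length z' -> Permutation z z'.

Definition UFM (S : R -> Prop) : Prop :=
  atomic S /\
  forall a z z', S a -> a <> 0 -> is_factorization S a z ->
    is_factorization S a z' -> Permutation z z'.

(** If [alpha = 1] the monoid is [N_0], which is factorial.  Otherwise [x |-> alpha^k x]
    is an automorphism of [M_alpha] for every [k], and the powers of [alpha] are unbounded.
    Given two factorizations [z], [z'] of [a], choose [c = alpha^k] so large that every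
    atom of [c z] and [c z'] exceeds every atom of [z] and [z'].  Then [z ++ c z'] and
    [z' ++ c z] factor [a + c a] with the same length, so they agree up to order by
    length-factoriality; discarding the large atoms shows that [z] and [z'] agree. *)

From Stdlib Require Import Reals ZArith List Permutation.
From Stdlib Require Import Lra Lia.
Open Scope R_scope.

Lemma Permutation_filter {A} (f : A -> bool) (l l' : list A) :
  Permutation l l' -> Permutation (filter f l) (filter f l').
Proof.
  induction 1 as [| x l l' _ IH | x y l | l l' l'' _ IH _ IH']; simpl.
  - constructor.
  - destruct (f x); auto.
  - destruct (f x), (f y); auto using perm_swap.
  - eauto using Permutation_trans.
Qed.

Lemma Permutation_app_separated {A} (P : A -> Prop) (P_dec : forall x, {P x} + {~ P x})
    (l1 l2 r1 r2 : list A) :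
  Permutation (l1 ++ r1) (l2 ++ r2) ->
  (forall x, In x (l1 ++ l2) -> P x) ->
  (forall x, In x (r1 ++ r2) -> ~ P x) ->
  Permutation l1 l2.
Proof.
  intros Hperm Hl Hr.
  set (f x := if P_dec x then true else false).
  assert (keep : forall l, (forall x, In x l -> P x) -> filter f l = l).
  { induction l as [| x l IH]; intros Hin; simpl; auto.
    unfold f at 1; destruct (P_dec x) as [_ | HnP].
    - f_equal; auto with datatypes.
    - exfalso; auto with datatypes. }
  assert (drop : forall l, (forall x, In x l -> ~ P x) -> filter f l = nil).
  { induction l as [| x l IH]; intros Hin; simpl; auto.
    unfold f at 1; destruct (P_dec x) as [HP | _].
    - exfalso; apply (Hin x); auto with datatypes.
    - auto with datatypes. }
  apply (Permutation_filter f) in Hperm.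
  rewrite !filter_app, (keep l1), (keep l2), (drop r1), (drop r2), !app_nil_r in Hperm;
    auto; intros x Hx; auto using in_or_app.
Qed.

Lemma sumR_app (l1 l2 : list R) : sumR (l1 ++ l2) = sumR l1 + sumR l2.
Proof. induction l1 as [| x l1 IH]; simpl; [ring | rewrite IH; ring]. Qed.

Lemma sumR_map_mul (c : R) (l : list R) : sumR (map (Rmult c) l) = c * sumR l.
Proof. induction l as [| x l IH]; simpl; [ring | rewrite IH; ring]. Qed.

Lemma sumR_repeat (u : R) (n : nat) : sumR (repeat u n) = INR n * u.
Proof. induction n as [| n IH]; [simpl; ring | rewrite S_INR; simpl; rewrite IH; ring]. Qed.

Lemma sumR_nonneg (l : list R) : Forall (Rle 0) l -> 0 <= sumR l.
Proof. induction 1; simpl; lra. Qed.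

Lemma list_upper_bound (l : list R) : exists B, forall x, In x l -> x <= B.
Proof.
  induction l as [| y l [B HB]]; [exists 0; contradiction|].
  exists (Rmax y B); intros x [<- | Hx]; [apply Rmax_l|].
  apply Rle_trans with B; auto using Rmax_r.
Qed.

Lemma list_lower_bound_pos (l : list R) :
  (forall x, In x l -> 0 < x) -> exists m, 0 < m /\ forall x, In x l -> m <= x.
Proof.
  induction l as [| y l IH]; intros Hpos; [exists 1; split; [lra | contradiction]|].
  destruct IH as [m [Hm Hmin]]; auto with datatypes.
  exists (Rmin y m); split.
  - apply Rmin_pos; auto with datatypes.
  - intros x [<- | Hx]; [apply Rmin_l|].
    apply Rle_trans with m; auto using Rmin_r.
Qed.

Lemma powerRZ_unbounded_gt1 (a X : R) : 1 < a -> exists k, X < powerRZ a k.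
Proof.
  intros Ha.
  destruct (Pow_x_infinity a) with (b := X + 1) as [N HN]; [rewrite Rabs_pos_eq; lra|].
  exists (Z.of_nat N); rewrite <- pow_powerRZ.
  specialize (HN N (le_n N)); rewrite Rabs_pos_eq in HN; [lra|].
  apply pow_le; lra.
Qed.

Lemma powerRZ_unbounded (a X : R) : 0 < a -> a <> 1 -> exists k, X < powerRZ a k.
Proof.
  intros Ha Ha1; destruct (Rlt_or_le 1 a) as [Hgt | Hle].
  - now apply powerRZ_unbounded_gt1.
  - destruct (powerRZ_unbounded_gt1 (/ a) X) as [k Hk].
    { rewrite <- Rinv_1; apply Rinv_lt_contravar; lra. }
    exists (- k)%Z; now rewrite powerRZ_neg', <- powerRZ_inv'.
Qed.

Lemma separating_power (a : R) (l : list R) :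
  0 < a -> a <> 1 -> (forall x, In x l -> 0 < x) ->
  exists k B, (forall x, In x l -> x <= B) /\ (forall x, In x l -> B < powerRZ a k * x).
Proof.
  intros Ha Ha1 Hpos.
  destruct (list_upper_bound l) as [B HB].
  destruct (list_lower_bound_pos l Hpos) as [m [Hm Hmin]].
  destruct (powerRZ_unbounded a (B / m) Ha Ha1) as [k Hk].
  exists k, B; split; auto.
  intros x Hx.
  assert (HBm : B < powerRZ a k * m).
  { apply (Rmult_lt_compat_r m) in Hk; auto.
    unfold Rdiv in Hk; rewrite Rmult_assoc, Rinv_l in Hk; lra. }
  pose proof (Hmin x Hx); pose proof (powerRZ_lt a k Ha).
  apply Rlt_le_trans with (powerRZ a k * m); auto.
  apply Rmult_le_compat_l; lra.
Qed.

Lemma factorization_perm_of_single_atom (S : R -> Prop) (u0 : R) :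
  u0 <> 0 -> (forall u, is_atom S u -> u = u0) ->
  forall a z z', is_factorization S a z -> is_factorization S a z' -> Permutation z z'.
Proof.
  intros Hu0 Hatoms a z z' [Hz Hsz] [Hz' Hsz'].
  assert (Ez : z = repeat u0 (length z)).
  { apply Forall_eq_repeat; eapply Forall_impl; [|exact Hz]; intros; symmetry; auto. }
  assert (Ez' : z' = repeat u0 (length z')).
  { apply Forall_eq_repeat; eapply Forall_impl; [|exact Hz']; intros; symmetry; auto. }
  assert (Hlen : length z = length z').
  { apply INR_eq, (Rmult_eq_reg_r u0); auto.
    rewrite <- !sumR_repeat, <- Ez, <- Ez'; congruence. }
  rewrite Ez, Ez', Hlen; apply Permutation_refl.
Qed.

Section ReducedSubmonoid.

Variable S : R -> Prop.
Hypothesis S_nonneg : forall x, S x -> 0 <= x.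

Lemma atom_pos (u : R) : is_atom S u -> 0 < u.
Proof. intros [Su [Hu _]]; pose proof (S_nonneg u Su); lra. Qed.

Lemma factorization_pos (a : R) (z : list R) :
  is_factorization S a z -> forall u, In u z -> 0 < u.
Proof. intros [Hz _] u Hu; apply atom_pos; exact (proj1 (Forall_forall _ z) Hz u Hu). Qed.

Lemma factorization_zero (z : list R) : is_factorization S 0 z -> z = nil.
Proof.
  intros Hz; destruct z as [| u z]; auto.
  pose proof (factorization_pos 0 (u :: z) Hz) as Hpos.
  assert (0 <= sumR z).
  { apply sumR_nonneg, Forall_forall; intros v Hv; apply Rlt_le, Hpos; now right. }
  assert (0 < u) by (apply Hpos; now left).
  destruct Hz as [_ Hsum]; simpl in Hsum; lra.
Qed.

Lemma UFM_LFM : UFM S -> LFM S.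
Proof.
  intros [Hatomic Huniq]; split; auto.
  intros a z z' Sa Hz Hz' _.
  destruct (Req_dec a 0) as [-> | Ha].
  - rewrite (factorization_zero z Hz), (factorization_zero z' Hz'); constructor.
  - eauto.
Qed.

Section Scaling.

Variable c : R.
Hypothesis c_neq0 : c <> 0.
Hypothesis S_scale : forall x, S (c * x) <-> S x.

Lemma atom_scale (u : R) : is_atom S u -> is_atom S (c * u).
Proof.
  intros [Su [Hu Hsplit]]; repeat split.
  - now apply S_scale.
  - now apply Rmult_integral_contrapositive_currified.
  - intros v w Sv Sw Huvw.
    assert (Sdiv : forall y, S y -> S (y / c)).
    { intros y Sy; apply S_scale; now replace (c * (y / c)) with y by (field; auto). }
    assert (Hdiv0 : forall y, y / c = 0 -> y = 0).
    { intros y Hy; replace y with (c * (y / c)) by (field; auto); rewrite Hy; ring. }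
    destruct (Hsplit (v / c) (w / c)) as [Hv | Hw]; auto.
    apply (Rmult_eq_reg_l c); auto; rewrite Huvw; field; auto.
Qed.

Lemma factorization_scale (a : R) (z : list R) :
  is_factorization S a z -> is_factorization S (c * a) (map (Rmult c) z).
Proof.
  intros [Hz Hsum]; split.
  - apply Forall_map; eapply Forall_impl; [|exact Hz]; apply atom_scale.
  - now rewrite sumR_map_mul, Hsum.
Qed.

Hypothesis S_add : forall x y, S x -> S y -> S (x + y).

Lemma LFM_perm_of_separating_scale (B a : R) (z z' : list R) :
  LFM S -> S a -> is_factorization S a z -> is_factorization S a z' ->
  (forall u, In u (z ++ z') -> u <= B) ->
  (forall u, In u (z ++ z') -> B < c * u) ->
  Permutation z z'.
Proof.
  intros [_ Hlf] Sa Hz Hz' Hsmall Hlarge.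
  assert (Hmixed : forall y y', is_factorization S a y -> is_factorization S a y' ->
            is_factorization S (a + c * a) (y ++ map (Rmult c) y')).
  { intros y y' [Hy Hsy] Hy'; destruct (factorization_scale a y' Hy') as [Hcy' Hscy'].
    split; [now apply Forall_app | now rewrite sumR_app, Hsy, Hscy']. }
  apply (Permutation_app_separated (fun x => x <= B) (fun x => Rle_dec x B)
           z z' (map (Rmult c) z') (map (Rmult c) z)).
  - apply (Hlf (a + c * a)); auto.
    + apply S_add; auto; apply S_scale; auto.
    + rewrite !length_app, !length_map; lia.
  - exact Hsmall.
  - intros x Hx; apply in_app_or in Hx as [Hx | Hx]; apply in_map_iff in Hx as [u [<- Hu]];
      apply Rlt_not_le, Hlarge; auto using in_or_app.
Qed.

End Scaling.

End ReducedSubmonoid.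

Lemma laurent_eval_app (a : R) (l l' : list Z) :
  laurent_eval a (l ++ l') = laurent_eval a l + laurent_eval a l'.
Proof. unfold laurent_eval; now rewrite map_app, sumR_app. Qed.

Lemma laurent_eval_shift (a : R) (k : Z) (l : list Z) :
  a <> 0 -> laurent_eval a (map (Z.add k) l) = powerRZ a k * laurent_eval a l.
Proof.
  intros Ha; unfold laurent_eval; induction l as [| j l IH]; simpl; [ring|].
  rewrite powerRZ_add, IH by auto; ring.
Qed.

Lemma M_alpha_nonneg (a x : R) : 0 < a -> M_alpha a x -> 0 <= x.
Proof.
  intros Ha [l ->]; apply sumR_nonneg, Forall_forall.
  intros y Hy; apply in_map_iff in Hy as [k [<- _]]; now apply powerRZ_le.
Qed.

Lemma M_alpha_add (a x y : R) : M_alpha a x -> M_alpha a y -> M_alpha a (x + y).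
Proof. intros [l ->] [l' ->]; exists (l ++ l'); now rewrite laurent_eval_app. Qed.

Lemma M_alpha_scale (a : R) (k : Z) (x : R) :
  0 < a -> M_alpha a x -> M_alpha a (powerRZ a k * x).
Proof. intros Ha [l ->]; exists (map (Z.add k) l); rewrite laurent_eval_shift; lra. Qed.

Lemma M_alpha_scale_iff (a : R) (k : Z) (x : R) :
  0 < a -> M_alpha a (powerRZ a k * x) <-> M_alpha a x.
Proof.
  intros Ha; split; [|now apply M_alpha_scale].
  intros Hx; apply (M_alpha_scale a (- k)) in Hx; auto.
  rewrite <- Rmult_assoc, <- powerRZ_add, Z.add_opp_diag_l, Rmult_1_l in Hx; auto; lra.
Qed.

Lemma M_alpha_1_atom (u : R) : is_atom (M_alpha 1) u -> u = 1.
Proof.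
  intros [[[| k l] ->] [Hu Hsplit]]; [unfold laurent_eval in Hu; simpl in Hu; lra|].
  assert (Hcons : laurent_eval 1 (k :: l) = 1 + laurent_eval 1 l).
  { unfold laurent_eval; simpl; now rewrite powerRZ_R1. }
  rewrite Hcons in *.
  destruct (Hsplit 1 (laurent_eval 1 l)) as [H | H]; auto; try lra.
  - exists (0%Z :: nil); unfold laurent_eval; simpl; lra.
  - now exists l.
Qed.

Theorem proposition5p3 (alpha : R) (Halpha : 0 < alpha) :
  LFM (M_alpha alpha) <-> UFM (M_alpha alpha).
Proof.
  pose proof (fun x => M_alpha_nonneg alpha x Halpha) as Hnonneg.
  split; [|now apply UFM_LFM].
  intros HLFM; split; [apply HLFM|].
  intros a z z' Sa _ Hz Hz'.
  destruct (Req_dec alpha 1) as [-> | Hne].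
  - exact (factorization_perm_of_single_atom _ 1 R1_neq_R0 M_alpha_1_atom a z z' Hz Hz').
  - assert (Hpos : forall u, In u (z ++ z') -> 0 < u).
    { intros u Hu; apply in_app_or in Hu as [Hu | Hu];
        [exact (factorization_pos _ Hnonneg a z Hz u Hu)
        | exact (factorization_pos _ Hnonneg a z' Hz' u Hu)]. }
    destruct (separating_power alpha (z ++ z') Halpha Hne Hpos) as [k [B [Hsmall Hlarge]]].
    apply (LFM_perm_of_separating_scale (M_alpha alpha) (powerRZ alpha k)) with B a; auto.
    + apply Rgt_not_eq, powerRZ_lt; auto.
    + intros x; now apply M_alpha_scale_iff.
    + apply M_alpha_add.
Qed.
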